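(* Let $l\geq 2$ and $\phi_{K_l}(x,y)=S_{l-1}(\lambda)\alpha-S_{l-2}(\lambda)\beta$ be the Riley polynomial of $K_l$ as below. Then for each fixed real $x$, $\lim_{y\to\infty}(-1)^l\phi_{K_l}(x,y)=+\infty$.
   Context: $S_n$: $S_0=1$, $S_1=z$, $S_{n+1}=zS_n-S_{n-1}$. $\lambda(x,y)=9x^2-12x^4+4x^6-5y+10x^2y+2x^4y-4x^6y-11x^2y^2+8x^4y^2+x^6y^2+5y^3-4x^2y^3-3x^4y^3+3x^2y^4-y^5$, $\alpha(x,y)=1-4x^2+2x^4+2y-x^2y-x^4y-y^2+2x^2y^2-y^3$, $\beta(x,y)=-1+x^2-y$. $K_l$ is the two-bridge knot $K(10(l-1)+7,4(l-1)+3)$. *)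

From Stdlib Require Import Reals.
Open Scope R_scope.

Fixpoint S (n : nat) (z : R) : R :=
  match n with
  | O => 1
  | Datatypes.S m =>
      match m with
      | O => z
      | Datatypes.S k => z * S m z - S k z
      end
  end.

Definition lam (x y : R) : R :=
  9*x^2 - 12*x^4 + 4*x^6 - 5*y + 10*x^2*y + 2*x^4*y - 4*x^6*y
  - 11*x^2*y^2 + 8*x^4*y^2 + x^6*y^2 + 5*y^3 - 4*x^2*y^3 - 3*x^4*y^3
  + 3*x^2*y^4 - y^5.

Definition alpha (x y : R) : R :=
  1 - 4*x^2 + 2*x^4 + 2*y - x^2*y - x^4*y - y^2 + 2*x^2*y^2 - y^3.

Definition beta (x y : R) : R := -1 + x^2 - y.

(* Riley polynomial of K_l = K(10(l-1)+7, 4(l-1)+3), for l >= 2. *)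
Definition phiK (l : nat) (x y : R) : R :=
  S (l - 1) (lam x y) * alpha x y - S (l - 2) (lam x y) * beta x y.

(** For fixed [x], [-lam], [-alpha] and [-beta] are monic
    polynomials in [y] of degrees 5, 3 and 1, so they all tend to [+oo].
    Since [S n (-w) = (-1)^n S n w], the sign [(-1)^l] turns [phiK l] into
    [S (l-1) w * (-alpha) + S (l-2) w * (-beta)] with [w = -lam], and for
    [w >= 2] every [S n w] is at least [1]; hence this is at least [-alpha]. *)

From Stdlib Require Import Reals Lra Lia Psatz List.
Import ListNotations.
Open Scope R_scope.

Definition eventually (P : R -> Prop) : Prop := exists N, forall y, N < y -> P y.

Lemma eventually_and (P Q : R -> Prop) :
  eventually P -> eventually Q -> eventually (fun y => P y /\ Q y).
Proof.
  intros [N1 HP] [N2 HQ]; exists (Rmax N1 N2); intros y hy.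
  split; [apply HP | apply HQ]; pose proof (Rmax_l N1 N2); pose proof (Rmax_r N1 N2); lra.
Qed.

Fixpoint horner (cs : list R) (y : R) : R :=
  match cs with
  | [] => 0
  | c :: cs' => c + y * horner cs' y
  end.

Lemma monic_horner_unbounded (c : R) (cs : list R) (M : R) :
  eventually (fun y => M < y ^ length (c :: cs) + horner (c :: cs) y).
Proof.
  revert c M; induction cs as [|c' cs IH]; intros c M.
  - exists (M - c); intros y hy; simpl; lra.
  - destruct (IH c' (Rabs (M - c))) as [N HN].
    exists (Rmax N 1); intros y hy.
    pose proof (Rmax_l N 1); pose proof (Rmax_r N 1).
    pose proof (Rle_abs (M - c)); pose proof (Rabs_pos (M - c)).
    specialize (HN y ltac:(lra)).
    replace (y ^ length (c :: c' :: cs) + horner (c :: c' :: cs) y)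
      with (c + y * (y ^ length (c' :: cs) + horner (c' :: cs) y)) by (simpl; ring).
    nra.
Qed.

Lemma lam_to_minus_infty (x M : R) : eventually (fun y => lam x y < M).
Proof.
  set (a := x ^ 2).
  set (c := -9*a + 12*a^2 - 4*a^3).
  set (cs := [5 - 10*a - 2*a^2 + 4*a^3; 11*a - 8*a^2 - a^3; -5 + 4*a + 3*a^2; -3*a]).
  destruct (monic_horner_unbounded c cs (- M)) as [N HN].
  exists N; intros y hy; specialize (HN y hy).
  enough (lam x y = - (y ^ 5 + horner (c :: cs) y)) by (simpl length in HN; lra).
  unfold lam, c, cs, a; simpl; ring.
Qed.

Lemma alpha_to_minus_infty (x M : R) : eventually (fun y => alpha x y < M).
Proof.
  set (a := x ^ 2).
  destruct (monic_horner_unbounded (-1 + 4*a - 2*a^2) [-2 + a + a^2; 1 - 2*a] (- M))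
    as [N HN].
  exists N; intros y hy; specialize (HN y hy).
  enough (alpha x y = - (y ^ 3 + horner (-1 + 4*a - 2*a^2 :: [-2 + a + a^2; 1 - 2*a]) y))
    by (simpl length in HN; lra).
  unfold alpha, a; simpl; ring.
Qed.

Lemma beta_to_minus_infty (x M : R) : eventually (fun y => beta x y < M).
Proof.
  destruct (monic_horner_unbounded (1 - x ^ 2) [] (- M)) as [N HN].
  exists N; intros y hy; specialize (HN y hy).
  unfold beta; simpl in HN; lra.
Qed.

Lemma S_opp (n : nat) (z : R) : S n (- z) = (-1) ^ n * S n z.
Proof.
  enough (H : S n (- z) = (-1) ^ n * S n z /\
              S (Datatypes.S n) (- z) = (-1) ^ Datatypes.S n * S (Datatypes.S n) z)
    by apply H.
  induction n as [|n [IH IH']]; [simpl; split; ring|].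
  split; [exact IH'|].
  change (S (Datatypes.S (Datatypes.S n)) (- z))
    with (- z * S (Datatypes.S n) (- z) - S n (- z)).
  change (S (Datatypes.S (Datatypes.S n)) z) with (z * S (Datatypes.S n) z - S n z).
  rewrite IH, IH'; simpl; ring.
Qed.

Lemma S_ge1 (n : nat) (w : R) : 2 <= w -> 1 <= S n w.
Proof.
  intro hw.
  enough (H : 1 <= S n w <= S (Datatypes.S n) w) by apply H.
  induction n as [|n IH]; [simpl; lra|].
  change (S (Datatypes.S (Datatypes.S n)) w) with (w * S (Datatypes.S n) w - S n w).
  nra.
Qed.

Lemma signed_phiK (l : nat) (x y : R) : (2 <= l)%nat ->
  (-1) ^ l * phiK l x y =
  S (l - 1) (- lam x y) * (- alpha x y) + S (l - 2) (- lam x y) * (- beta x y).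
Proof.
  intro hl; destruct l as [|[|k]]; [lia|lia|].
  unfold phiK; replace (Datatypes.S (Datatypes.S k) - 1)%nat with (Datatypes.S k) by lia.
  replace (Datatypes.S (Datatypes.S k) - 2)%nat with k by lia.
  rewrite !S_opp.
  assert (Hsq : (-1) ^ k * (-1) ^ k = 1)
    by (rewrite <- Rpow_mult_distr, <- (pow1 k); f_equal; ring).
  simpl; nra.
Qed.

Theorem lemma6p6 (l : nat) (hl : (2 <= l)%nat) (x : R) :
  forall M : R, exists N : R, forall y : R, N < y -> M < (-1) ^ l * phiK l x y.
Proof.
  intro M.
  destruct (eventually_and _ _ (lam_to_minus_infty x (-2))
              (eventually_and _ _ (alpha_to_minus_infty x (- Rmax M 0))
                                  (beta_to_minus_infty x 0)))
    as [N HN].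
  exists N; intros y hy; destruct (HN y hy) as [Hlam [Halpha Hbeta]].
  rewrite signed_phiK by exact hl.
  pose proof (S_ge1 (l - 1) (- lam x y) ltac:(lra)).
  pose proof (S_ge1 (l - 2) (- lam x y) ltac:(lra)).
  pose proof (Rmax_l M 0); pose proof (Rmax_r M 0).
  nra.
Qed.
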